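(* Every pointed stable double category is a stable squares category.
   Context: A double category $\mathbb{C}$ has objects, horizontal morphisms ($\rightarrowtail$, category $\mathcal{H}_{\mathbb{C}}$), vertical morphisms ($\twoheadrightarrow$, category $\mathcal{V}_{\mathbb{C}}$), and squares with associative unital compositions. It is pointed if it has a distinguished object $O$ initial in $\mathcal{H}_{\mathbb{C}}$ and terminal in $\mathcal{V}_{\mathbb{C}}$. It is stable if the maps from the set of squares to the set of spans (pairs $A\rightarrowtail B$, $A\twoheadrightarrow C$) and to the set of cospans (pairs $B\twoheadrightarrow D$, $C\rightarrowtail D$), sending a square to its top-left span, resp. bottom-right cospan, are bijections. A double category is flat if squares are determined by their boundary; a squares category is a flat double category with a distinguished object $O$ initial in $\mathcal{H}_{\mathbb{C}}$ and terminal in $\mathcal{V}_{\mathbb{C}}$. A vertical $f:A\twoheadrightarrow B$ is a vertical weak equivalence if the boundary (top $O\rightarrowtail A$, left $\mathrm{id}_O$, right $f$, bottom $O\rightarrowtail B$) is a square. Vertical natural transformations between double functors of flat double categories: vertical components $\tau_A$ such that $(Ff,\tau_A,\tau_{A'},Gf)$ is a square for every horizontal $f$, and naturality squares commute in the vertical category for vertical morphisms; $\mathrm{Fun}^v$ denotes the resulting functor category. Let $\boxdot$ be the flat double category generated by one square with corners $a,b,c,d$ (horizontal $a\rightarrowtail b$, $c\rightarrowtail d$; vertical $a\twoheadrightarrow c$, $b\twoheadrightarrow d$), $i:\mathrm{span}\hookrightarrow\boxdot$ the sub-double category on $a\rightarrowtail b,a\twoheadrightarrow c$, and $j:\mathrm{cospan}\hookrightarrow\boxdot$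 the one on $b\twoheadrightarrow d,c\rightarrowtail d$. A squares category is stable if: (i) $i^*:\mathrm{Fun}^v(\boxdot,\mathbb{C})\to\mathrm{Fun}^v(\mathrm{span},\mathbb{C})$ has a section functor $s$; (ii) there is a natural transformation $w:si^*\Rightarrow\mathrm{id}$ whose component at each square is the identity at $a,b,c$; (iii) $j^*:\mathrm{Fun}^v(\boxdot,\mathbb{C})\to\mathrm{Fun}^v(\mathrm{cospan},\mathbb{C})$ has a section functor $t$; (iv) there is a natural transformation $u:tj^*\Rightarrow\mathrm{id}$ whose component at each square is the identity at $b,c,d$ and whose $a$-component is a vertical weak equivalence. *)

(* Strict double categories, presented "set-theoretically": each of the four
   kinds of cells (objects, horizontal morphisms, vertical morphisms, squares)
   is a type, with source/target (boundary) maps and TOTAL composition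
   operations whose values are only specified on composable pairs.
   All compositions are written in diagrammatic order:
     hcomp f g  =  "f then g"   (f : A >-> B, g : B >-> C  gives  A >-> C). *)

Set Implicit Arguments.

Record DoubleCat := {
  Ob  : Type;
  Hor : Type;
  Ver : Type;
  Sq  : Type;

  hsrc : Hor -> Ob;  htgt : Hor -> Ob;
  hid : Ob -> Hor;   hcomp : Hor -> Hor -> Hor;
  hsrc_id : forall A, hsrc (hid A) = A;
  htgt_id : forall A, htgt (hid A) = A;
  hsrc_comp : forall f g, htgt f = hsrc g -> hsrc (hcomp f g) = hsrc f;
  htgt_comp : forall f g, htgt f = hsrc g -> htgt (hcomp f g) = htgt g;
  hcomp_idl : forall f, hcomp (hid (hsrc f)) f = f;
  hcomp_idr : forall f, hcomp f (hid (htgt f)) = f;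
  hcompA : forall f g k, htgt f = hsrc g -> htgt g = hsrc k ->
             hcomp (hcomp f g) k = hcomp f (hcomp g k);

  vsrc : Ver -> Ob;  vtgt : Ver -> Ob;
  vid : Ob -> Ver;   vcomp : Ver -> Ver -> Ver;
  vsrc_id : forall A, vsrc (vid A) = A;
  vtgt_id : forall A, vtgt (vid A) = A;
  vsrc_comp : forall f g, vtgt f = vsrc g -> vsrc (vcomp f g) = vsrc f;
  vtgt_comp : forall f g, vtgt f = vsrc g -> vtgt (vcomp f g) = vtgt g;
  vcomp_idl : forall f, vcomp (vid (vsrc f)) f = f;
  vcomp_idr : forall f, vcomp f (vid (vtgt f)) = f;
  vcompA : forall f g k, vtgt f = vsrc g -> vtgt g = vsrc k ->
             vcomp (vcomp f g) k = vcomp f (vcomp g k);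

  (* boundary of a square:      top
                             A >----> B
                        left |        | right
                             v        v
                             C >----> D
                               bottom                  *)
  top : Sq -> Hor;  bottom : Sq -> Hor;
  left : Sq -> Ver; right : Sq -> Ver;
  bd_a : forall s, hsrc (top s) = vsrc (left s);
  bd_b : forall s, htgt (top s) = vsrc (right s);
  bd_c : forall s, hsrc (bottom s) = vtgt (left s);
  bd_d : forall s, htgt (bottom s) = vtgt (right s);

  sq_hid : Ver -> Sq;
  sq_vid : Hor -> Sq;
  sq_hid_bd : forall g, top (sq_hid g) = hid (vsrc g) /\ bottom (sq_hid g) = hid (vtgt g)
                        /\ left (sq_hid g) = g /\ right (sq_hid g) = g;
  sq_vid_bd : forall f, top (sq_vid f) = f /\ bottom (sq_vid f) = f
                        /\ left (sq_vid f) = vid (hsrc f) /\ right (sq_vid f) = vid (htgt f);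

  sq_hcomp : Sq -> Sq -> Sq;
  sq_vcomp : Sq -> Sq -> Sq;
  sq_hcomp_bd : forall s t, right s = left t ->
      top (sq_hcomp s t) = hcomp (top s) (top t) /\
      bottom (sq_hcomp s t) = hcomp (bottom s) (bottom t) /\
      left (sq_hcomp s t) = left s /\ right (sq_hcomp s t) = right t;
  sq_vcomp_bd : forall s t, bottom s = top t ->
      left (sq_vcomp s t) = vcomp (left s) (left t) /\
      right (sq_vcomp s t) = vcomp (right s) (right t) /\
      top (sq_vcomp s t) = top s /\ bottom (sq_vcomp s t) = bottom t;

  sq_hcompA : forall s t u, right s = left t -> right t = left u ->
      sq_hcomp (sq_hcomp s t) u = sq_hcomp s (sq_hcomp t u);
  sq_vcompA : forall s t u, bottom s = top t -> bottom t = top u ->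
      sq_vcomp (sq_vcomp s t) u = sq_vcomp s (sq_vcomp t u);
  sq_hcomp_idl : forall s, sq_hcomp (sq_hid (left s)) s = s;
  sq_hcomp_idr : forall s, sq_hcomp s (sq_hid (right s)) = s;
  sq_vcomp_idl : forall s, sq_vcomp (sq_vid (top s)) s = s;
  sq_vcomp_idr : forall s, sq_vcomp s (sq_vid (bottom s)) = s;

  sq_id_id : forall A, sq_hid (vid A) = sq_vid (hid A);
  sq_hid_comp : forall g g', vtgt g = vsrc g' ->
      sq_hid (vcomp g g') = sq_vcomp (sq_hid g) (sq_hid g');
  sq_vid_comp : forall f f', htgt f = hsrc f' ->
      sq_vid (hcomp f f') = sq_hcomp (sq_vid f) (sq_vid f');
  interchange : forall s t u v,
      right s = left t -> right u = left v -> bottom s = top u -> bottom t = top v ->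
      sq_vcomp (sq_hcomp s t) (sq_hcomp u v) = sq_hcomp (sq_vcomp s u) (sq_vcomp t v)
}.

Arguments hsrc {d}. Arguments htgt {d}. Arguments hid {d}. Arguments hcomp {d}.
Arguments vsrc {d}. Arguments vtgt {d}. Arguments vid {d}. Arguments vcomp {d}.
Arguments top {d}. Arguments bottom {d}. Arguments left {d}. Arguments right {d}.

Section Defs.
Variable C : DoubleCat.

Definition is_square (t : Hor C) (l r : Ver C) (b : Hor C) : Prop :=
  exists s : Sq C, top s = t /\ left s = l /\ right s = r /\ bottom s = b.

Definition h_initial (O : Ob C) : Prop :=
  forall A : Ob C,
    (exists f : Hor C, hsrc f = O /\ htgt f = A) /\
    (forall f f' : Hor C, hsrc f = O -> htgt f = A -> hsrc f' = O -> htgt f' = A -> f = f').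
Definition v_terminal (O : Ob C) : Prop :=
  forall A : Ob C,
    (exists g : Ver C, vsrc g = A /\ vtgt g = O) /\
    (forall g g' : Ver C, vsrc g = A -> vtgt g = O -> vsrc g' = A -> vtgt g' = O -> g = g').

Definition pointed (O : Ob C) : Prop := h_initial O /\ v_terminal O.

(* stable: square |-> top-left span  and  square |-> bottom-right cospan are bijections *)
Definition stable_dc : Prop :=
  (forall s s' : Sq C, top s = top s' -> left s = left s' -> s = s') /\
  (forall (f : Hor C) (g : Ver C), hsrc f = vsrc g ->
      exists s : Sq C, top s = f /\ left s = g) /\
  (forall s s' : Sq C, right s = right s' -> bottom s = bottom s' -> s = s') /\
  (forall (g : Ver C) (f : Hor C), vtgt g = htgt f ->
      exists s : Sq C, right s = g /\ bottom s = f).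

Definition flat : Prop :=
  forall s s' : Sq C, top s = top s' -> left s = left s' -> right s = right s' ->
    bottom s = bottom s' -> s = s'.

Definition squares_category (O : Ob C) : Prop := flat /\ h_initial O /\ v_terminal O.

Definition vwe (O : Ob C) (f : Ver C) : Prop :=
  forall t b : Hor C, hsrc t = O -> htgt t = vsrc f -> hsrc b = O -> htgt b = vtgt f ->
    is_square t (vid O) f b.

(* A double functor box -> C is a square of C (box is generated by one square);
   a double functor span -> C is a span, and cospan -> C a cospan of C.
   Morphisms are vertical natural transformations, given by their components. *)

Record Span := mkSpan { sp_h : Hor C; sp_v : Ver C }.
Record Cospan := mkCospan { co_v : Ver C; co_h : Hor C }.
Definition is_span (X : Span) : Prop := hsrc (sp_h X) = vsrc (sp_v X).
Definition is_cospan (X : Cospan) : Prop := vtgt (co_v X) = htgt (co_h X).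

Record Mor4 := mkMor4 { n_a : Ver C; n_b : Ver C; n_c : Ver C; n_d : Ver C }.
Record Mor3 := mkMor3 { m_a : Ver C; m_b : Ver C; m_c : Ver C }.
Record CMor3 := mkCMor3 { k_b : Ver C; k_c : Ver C; k_d : Ver C }.

Definition ca (s : Sq C) := hsrc (top s).
Definition cb (s : Sq C) := htgt (top s).
Definition cc (s : Sq C) := vtgt (left s).
Definition cd (s : Sq C) := htgt (bottom s).

(* components of a vertical natural transformation between two double functors
   box -> C (given by squares s, s') *)
Definition vnat_comp_ok (x x' : Ob C) (tau : Ver C) : Prop :=
  vsrc tau = x /\ vtgt tau = x' /\
  is_square (hid x) tau tau (hid x') /\              (* horizontal identity of box *)
  vcomp (vid x) tau = vcomp tau (vid x').            (* vertical identity of box *)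

Definition sq_mor (s s' : Sq C) (t : Mor4) : Prop :=
  vnat_comp_ok (ca s) (ca s') (n_a t) /\ vnat_comp_ok (cb s) (cb s') (n_b t) /\
  vnat_comp_ok (cc s) (cc s') (n_c t) /\ vnat_comp_ok (cd s) (cd s') (n_d t) /\
  is_square (top s) (n_a t) (n_b t) (top s') /\            (* horizontal a >-> b *)
  is_square (bottom s) (n_c t) (n_d t) (bottom s') /\      (* horizontal c >-> d *)
  vcomp (left s) (n_c t) = vcomp (n_a t) (left s') /\      (* vertical a ->> c *)
  vcomp (right s) (n_d t) = vcomp (n_b t) (right s').      (* vertical b ->> d *)

Definition id4 (s : Sq C) : Mor4 := mkMor4 (vid (ca s)) (vid (cb s)) (vid (cc s)) (vid (cd s)).
Definition comp4 (t u : Mor4) : Mor4 :=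
  mkMor4 (vcomp (n_a t) (n_a u)) (vcomp (n_b t) (n_b u))
         (vcomp (n_c t) (n_c u)) (vcomp (n_d t) (n_d u)).

Definition spa (X : Span) := hsrc (sp_h X).
Definition spb (X : Span) := htgt (sp_h X).
Definition spc (X : Span) := vtgt (sp_v X).
Definition span_mor (X Y : Span) (t : Mor3) : Prop :=
  vnat_comp_ok (spa X) (spa Y) (m_a t) /\ vnat_comp_ok (spb X) (spb Y) (m_b t) /\
  vnat_comp_ok (spc X) (spc Y) (m_c t) /\
  is_square (sp_h X) (m_a t) (m_b t) (sp_h Y) /\
  vcomp (sp_v X) (m_c t) = vcomp (m_a t) (sp_v Y).
Definition id3 (X : Span) : Mor3 := mkMor3 (vid (spa X)) (vid (spb X)) (vid (spc X)).
Definition comp3 (t u : Mor3) : Mor3 :=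
  mkMor3 (vcomp (m_a t) (m_a u)) (vcomp (m_b t) (m_b u)) (vcomp (m_c t) (m_c u)).

Definition cob (X : Cospan) := vsrc (co_v X).
Definition coc (X : Cospan) := hsrc (co_h X).
Definition cod (X : Cospan) := htgt (co_h X).
Definition cospan_mor (X Y : Cospan) (t : CMor3) : Prop :=
  vnat_comp_ok (cob X) (cob Y) (k_b t) /\ vnat_comp_ok (coc X) (coc Y) (k_c t) /\
  vnat_comp_ok (cod X) (cod Y) (k_d t) /\
  is_square (co_h X) (k_c t) (k_d t) (co_h Y) /\
  vcomp (co_v X) (k_d t) = vcomp (k_b t) (co_v Y).
Definition cid3 (X : Cospan) : CMor3 := mkCMor3 (vid (cob X)) (vid (coc X)) (vid (cod X)).
Definition ccomp3 (t u : CMor3) : CMor3 :=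
  mkCMor3 (vcomp (k_b t) (k_b u)) (vcomp (k_c t) (k_c u)) (vcomp (k_d t) (k_d u)).

(* the restriction functors i^* and j^* *)
Definition istar (s : Sq C) : Span := mkSpan (top s) (left s).
Definition istar_mor (t : Mor4) : Mor3 := mkMor3 (n_a t) (n_b t) (n_c t).
Definition jstar (s : Sq C) : Cospan := mkCospan (right s) (bottom s).
Definition jstar_mor (t : Mor4) : CMor3 := mkCMor3 (n_b t) (n_c t) (n_d t).

Definition section_i (sO : Span -> Sq C) (sM : Span -> Span -> Mor3 -> Mor4) : Prop :=
  (forall X, is_span X -> istar (sO X) = X) /\
  (forall X Y t, is_span X -> is_span Y -> span_mor X Y t ->
      sq_mor (sO X) (sO Y) (sM X Y t) /\ istar_mor (sM X Y t) = t) /\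
  (forall X, is_span X -> sM X X (id3 X) = id4 (sO X)) /\
  (forall X Y Z t u, is_span X -> is_span Y -> is_span Z ->
      span_mor X Y t -> span_mor Y Z u ->
      sM X Z (comp3 t u) = comp4 (sM X Y t) (sM Y Z u)).

Definition nat_w (sO : Span -> Sq C) (sM : Span -> Span -> Mor3 -> Mor4)
    (w : Sq C -> Mor4) : Prop :=
  (forall s, sq_mor (sO (istar s)) s (w s)) /\
  (forall s, n_a (w s) = vid (ca s) /\ n_b (w s) = vid (cb s) /\ n_c (w s) = vid (cc s)) /\
  (forall s s' t, sq_mor s s' t ->
      comp4 (w s) t = comp4 (sM (istar s) (istar s') (istar_mor t)) (w s')).

Definition section_j (tO : Cospan -> Sq C) (tM : Cospan -> Cospan -> CMor3 -> Mor4) : Prop :=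
  (forall X, is_cospan X -> jstar (tO X) = X) /\
  (forall X Y t, is_cospan X -> is_cospan Y -> cospan_mor X Y t ->
      sq_mor (tO X) (tO Y) (tM X Y t) /\ jstar_mor (tM X Y t) = t) /\
  (forall X, is_cospan X -> tM X X (cid3 X) = id4 (tO X)) /\
  (forall X Y Z t u, is_cospan X -> is_cospan Y -> is_cospan Z ->
      cospan_mor X Y t -> cospan_mor Y Z u ->
      tM X Z (ccomp3 t u) = comp4 (tM X Y t) (tM Y Z u)).

Definition nat_u (O : Ob C) (tO : Cospan -> Sq C) (tM : Cospan -> Cospan -> CMor3 -> Mor4)
    (u : Sq C -> Mor4) : Prop :=
  (forall s, sq_mor (tO (jstar s)) s (u s)) /\
  (forall s, n_b (u s) = vid (cb s) /\ n_c (u s) = vid (cc s) /\ n_d (u s) = vid (cd s)) /\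
  (forall s, vwe O (n_a (u s))) /\
  (forall s s' t, sq_mor s s' t ->
      comp4 (u s) t = comp4 (tM (jstar s) (jstar s') (jstar_mor t)) (u s')).

Definition stable_squares_category (O : Ob C) : Prop :=
  squares_category O /\
  (exists sO sM, section_i sO sM /\ exists w, nat_w sO sM w) /\
  (exists tO tM, section_j tO tM /\ exists u, nat_u O tO tM u).

End Defs.

From Stdlib Require Import ClassicalEpsilon.

(* Stability says that every span, and likewise every cospan, has exactly one
   filler square, so i^* and j^* are bijective on objects.  Their inverses
   extend to functors: the missing d-component of a transformation of spans is
   the right edge of the filler of (bottom edge, c-component), and since
   vertically pasted squares are again determined by their top-left span,
   this choice is compatible with the transformation (dually for cospans and
   the a-component).  The sections being inverse to i^* and j^*, both w and u
   can be taken to be identities; an identity is a vertical weak equivalence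
   because any two horizontal morphisms out of the initial object O agree. *)

Ltac split_conj := repeat match goal with |- _ /\ _ => split end.

Section DoubleCategory.
Variable C : DoubleCat.

Lemma vid_vcomp (A : Ob C) (g : Ver C) : vsrc g = A -> vcomp (vid A) g = g.
Proof. intros <-; apply vcomp_idl. Qed.

Lemma vcomp_vid (A : Ob C) (g : Ver C) : vtgt g = A -> vcomp g (vid A) = g.
Proof. intros <-; apply vcomp_idr. Qed.

Lemma sq_is_square (s : Sq C) : is_square C (top s) (left s) (right s) (bottom s).
Proof. exists s; auto. Qed.

Lemma vnat_comp_ok_intro (x x' : Ob C) (tau : Ver C) :
  vsrc tau = x -> vtgt tau = x' -> vnat_comp_ok C x x' tau.
Proof.
  intros Hs Ht; split; [exact Hs | split; [exact Ht | split]].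
  - destruct (sq_hid_bd C tau) as (Htop & Hbot & Hl & Hr).
    exists (sq_hid C tau); rewrite Htop, Hbot, Hl, Hr, Hs, Ht; auto.
  - rewrite (vid_vcomp x tau Hs), (vcomp_vid x' tau Ht); reflexivity.
Qed.

Lemma sq_mor_id4 (s : Sq C) : sq_mor s s (id4 C s).
Proof.
  unfold sq_mor, id4, ca, cb, cc, cd; simpl.
  split_conj; try (apply vnat_comp_ok_intro; [apply vsrc_id | apply vtgt_id]).
  - destruct (sq_vid_bd C (top s)) as (Htop & Hbot & Hl & Hr).
    exists (sq_vid C (top s)); auto.
  - destruct (sq_vid_bd C (bottom s)) as (Htop & Hbot & Hl & Hr).
    exists (sq_vid C (bottom s)); rewrite Hl, Hr, bd_c; auto.
  - rewrite (vcomp_vid _ (left s) eq_refl), (vid_vcomp _ (left s) (eq_sym (bd_a C s))).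
    reflexivity.
  - rewrite (vcomp_vid _ (right s) (eq_sym (bd_d C s))),
      (vid_vcomp _ (right s) (eq_sym (bd_b C s))).
    reflexivity.
Qed.

Lemma comp4_id4l (s s' : Sq C) (t : Mor4 C) : sq_mor s s' t -> comp4 (id4 C s) t = t.
Proof.
  intros ((Ha & _) & (Hb & _) & (Hc & _) & (Hd & _) & _).
  destruct t; unfold comp4, id4; simpl in *.
  rewrite (vid_vcomp _ _ Ha), (vid_vcomp _ _ Hb), (vid_vcomp _ _ Hc), (vid_vcomp _ _ Hd).
  reflexivity.
Qed.

Lemma comp4_id4r (s s' : Sq C) (t : Mor4 C) : sq_mor s s' t -> comp4 t (id4 C s') = t.
Proof.
  intros ((_ & Ha & _) & (_ & Hb & _) & (_ & Hc & _) & (_ & Hd & _) & _).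
  destruct t; unfold comp4, id4; simpl in *.
  rewrite (vcomp_vid _ _ Ha), (vcomp_vid _ _ Hb), (vcomp_vid _ _ Hc), (vcomp_vid _ _ Hd).
  reflexivity.
Qed.

Lemma vwe_vid (O A : Ob C) : h_initial C O -> vwe C O (vid A).
Proof.
  intros HO t b Ht_src Ht_tgt Hb_src Hb_tgt.
  rewrite vsrc_id in Ht_tgt; rewrite vtgt_id in Hb_tgt.
  destruct (HO A) as [_ Huniq].
  assert (Htb : t = b) by (apply Huniq; assumption); subst b.
  destruct (sq_vid_bd C t) as (Htop & Hbot & Hl & Hr).
  exists (sq_vid C t); rewrite Htop, Hbot, Hl, Hr, Ht_src, Ht_tgt; auto.
Qed.

Definition fill (f : Hor C) (g : Ver C) : Sq C :=
  epsilon (inhabits (sq_vid C f)) (fun s => top s = f /\ left s = g).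

Definition cofill (g : Ver C) (f : Hor C) : Sq C :=
  epsilon (inhabits (sq_vid C f)) (fun s => right s = g /\ bottom s = f).

Section Stable.
Hypothesis HC : stable_dc C.

Lemma sq_eq_span (s s' : Sq C) : top s = top s' -> left s = left s' -> s = s'.
Proof. apply HC. Qed.

Lemma sq_eq_cospan (s s' : Sq C) : right s = right s' -> bottom s = bottom s' -> s = s'.
Proof. apply HC. Qed.

Lemma flat_stable : flat C.
Proof. intros s s' Ht Hl _ _; exact (sq_eq_span s s' Ht Hl). Qed.

Lemma fill_spec (f : Hor C) (g : Ver C) :
  hsrc f = vsrc g -> top (fill f g) = f /\ left (fill f g) = g.
Proof. intros H; unfold fill; apply epsilon_spec, HC, H. Qed.

Lemma fill_eq (f : Hor C) (g : Ver C) (s : Sq C) : top s = f -> left s = g -> fill f g = s.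
Proof.
  intros <- <-.
  destruct (fill_spec (top s) (left s) (bd_a C s)) as [Ht Hl].
  exact (sq_eq_span _ _ Ht Hl).
Qed.

Lemma cofill_spec (g : Ver C) (f : Hor C) :
  vtgt g = htgt f -> right (cofill g f) = g /\ bottom (cofill g f) = f.
Proof. intros H; unfold cofill; apply epsilon_spec, HC, H. Qed.

Lemma cofill_eq (g : Ver C) (f : Hor C) (s : Sq C) :
  right s = g -> bottom s = f -> cofill g f = s.
Proof.
  intros <- <-.
  destruct (cofill_spec (right s) (bottom s) (eq_sym (bd_d C s))) as [Hr Hb].
  exact (sq_eq_cospan _ _ Hr Hb).
Qed.

(* Two vertical pastings with the same outer span coincide, hence so do their
   outer cospans. *)
Lemma vpaste_span (s r q p : Sq C) :
  bottom s = top r -> bottom q = top p -> top s = top q ->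
  vcomp (left s) (left r) = vcomp (left q) (left p) ->
  bottom r = bottom p /\ vcomp (right s) (right r) = vcomp (right q) (right p).
Proof.
  intros Hsr Hqp Htop Hleft.
  destruct (sq_vcomp_bd C s r Hsr) as (Hl1 & Hr1 & Ht1 & Hb1).
  destruct (sq_vcomp_bd C q p Hqp) as (Hl2 & Hr2 & Ht2 & Hb2).
  assert (E : sq_vcomp C s r = sq_vcomp C q p)
    by (apply sq_eq_span; congruence).
  split; [rewrite <- Hb1, <- Hb2 | rewrite <- Hr1, <- Hr2]; congruence.
Qed.

Lemma vpaste_cospan (s r q p : Sq C) :
  bottom s = top r -> bottom q = top p -> bottom r = bottom p ->
  vcomp (right s) (right r) = vcomp (right q) (right p) ->
  top s = top q /\ vcomp (left s) (left r) = vcomp (left q) (left p).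
Proof.
  intros Hsr Hqp Hbot Hright.
  destruct (sq_vcomp_bd C s r Hsr) as (Hl1 & Hr1 & Ht1 & Hb1).
  destruct (sq_vcomp_bd C q p Hqp) as (Hl2 & Hr2 & Ht2 & Hb2).
  assert (E : sq_vcomp C s r = sq_vcomp C q p)
    by (apply sq_eq_cospan; congruence).
  split; [rewrite <- Ht1, <- Ht2 | rewrite <- Hl1, <- Hl2]; congruence.
Qed.

Definition span_square (X : Span C) : Sq C := fill (sp_h X) (sp_v X).

Definition span_lower (X : Span C) (t : Mor3 C) : Sq C :=
  fill (bottom (span_square X)) (m_c t).

Definition span_square_mor (X _ : Span C) (t : Mor3 C) : Mor4 C :=
  mkMor4 C (m_a t) (m_b t) (m_c t) (right (span_lower X t)).

Lemma span_square_spec (X : Span C) :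
  is_span X -> top (span_square X) = sp_h X /\ left (span_square X) = sp_v X.
Proof. apply fill_spec. Qed.

Lemma span_square_corners (X : Span C) : is_span X ->
  ca C (span_square X) = spa X /\ cb C (span_square X) = spb X /\
  cc C (span_square X) = spc X.
Proof.
  intros HX; destruct (span_square_spec X HX) as [Ht Hl].
  unfold ca, cb, cc, spa, spb, spc; rewrite Ht, Hl; auto.
Qed.

Lemma istar_span_square (X : Span C) : is_span X -> istar C (span_square X) = X.
Proof.
  intros HX; destruct (span_square_spec X HX) as [Ht Hl].
  unfold istar; rewrite Ht, Hl; destruct X; reflexivity.
Qed.

Lemma span_square_istar (s : Sq C) : span_square (istar C s) = s.
Proof. apply fill_eq; reflexivity. Qed.

Lemma span_lower_spec (X Y : Span C) (t : Mor3 C) :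
  is_span X -> is_span Y -> span_mor X Y t ->
  top (span_lower X t) = bottom (span_square X) /\ left (span_lower X t) = m_c t /\
  bottom (span_lower X t) = bottom (span_square Y) /\
  vcomp (right (span_square X)) (right (span_lower X t))
    = vcomp (m_b t) (right (span_square Y)).
Proof.
  intros HX HY (_ & _ & (Hc & _) & (q & Hqt & Hql & Hqr & Hqb) & Hv).
  destruct (span_square_spec X HX) as [HXt HXl].
  destruct (span_square_spec Y HY) as [HYt HYl].
  assert (Hsrc : hsrc (bottom (span_square X)) = vsrc (m_c t))
    by (rewrite bd_c, HXl, Hc; reflexivity).
  destruct (fill_spec _ _ Hsrc) as [Ht Hl].
  fold (span_lower X t) in Ht, Hl.
  assert (Hleft : vcomp (left (span_square X)) (left (span_lower X t))
                  = vcomp (left q) (left (span_square Y)))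
    by (rewrite Hl, Hql, HXl, HYl; exact Hv).
  destruct (vpaste_span (span_square X) (span_lower X t) q (span_square Y))
    as [Hb Hr]; try congruence.
  split_conj; congruence.
Qed.

Lemma span_square_mor_sq_mor (X Y : Span C) (t : Mor3 C) :
  is_span X -> is_span Y -> span_mor X Y t ->
  sq_mor (span_square X) (span_square Y) (span_square_mor X Y t).
Proof.
  intros HX HY Ht.
  destruct (span_lower_spec X Y t HX HY Ht) as (Hlt & Hll & Hlb & Hlr).
  destruct (span_square_corners X HX) as (Xa & Xb & Xc).
  destruct (span_square_corners Y HY) as (Ya & Yb & Yc).
  destruct (span_square_spec X HX) as [HXt HXl].
  destruct (span_square_spec Y HY) as [HYt HYl].
  destruct Ht as (Ha & Hb & Hc & Htop & Hv).
  unfold sq_mor, span_square_mor; simpl.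
  rewrite Xa, Xb, Xc, Ya, Yb, Yc, HXt, HYt, HXl, HYl.
  split_conj; auto.
  - apply vnat_comp_ok_intro; unfold cd; rewrite <- ?bd_b, <- ?bd_d; congruence.
  - rewrite <- Hlt, <- Hll, <- Hlb; apply sq_is_square.
Qed.

Lemma span_square_mor_istar (s s' : Sq C) (t : Mor4 C) : sq_mor s s' t ->
  span_square_mor (istar C s) (istar C s') (istar_mor t) = t.
Proof.
  intros (_ & _ & _ & _ & _ & (q & Hqt & Hql & Hqr & _) & _).
  unfold span_square_mor, span_lower; rewrite span_square_istar; simpl.
  rewrite (fill_eq _ _ q Hqt Hql), Hqr; destruct t; reflexivity.
Qed.

Lemma span_square_mor_id (X : Span C) :
  is_span X -> span_square_mor X X (id3 X) = id4 C (span_square X).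
Proof.
  intros HX.
  assert (Hid : istar_mor (id4 C (span_square X)) = id3 X).
  { destruct (span_square_corners X HX) as (Xa & Xb & Xc).
    unfold istar_mor, id4, id3; simpl; rewrite Xa, Xb, Xc; reflexivity. }
  transitivity (span_square_mor (istar C (span_square X)) (istar C (span_square X))
                  (istar_mor (id4 C (span_square X)))).
  - rewrite istar_span_square, Hid by exact HX; reflexivity.
  - apply span_square_mor_istar, sq_mor_id4.
Qed.

Lemma span_square_mor_comp (X Y Z : Span C) (t u : Mor3 C) :
  is_span X -> is_span Y -> is_span Z -> span_mor X Y t -> span_mor Y Z u ->
  span_square_mor X Z (comp3 t u)
    = comp4 (span_square_mor X Y t) (span_square_mor Y Z u).
Proof.
  intros HX HY HZ Ht Hu.
  destruct (span_lower_spec X Y t HX HY Ht) as (Ht1 & Hl1 & Hb1 & _).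
  destruct (span_lower_spec Y Z u HY HZ Hu) as (Ht2 & Hl2 & _ & _).
  assert (Hglue : bottom (span_lower X t) = top (span_lower Y u)) by congruence.
  destruct (sq_vcomp_bd C _ _ Hglue) as (Hl & Hr & Htop & _).
  unfold span_square_mor, comp3, comp4, span_lower at 1; simpl; f_equal.
  rewrite (fill_eq _ _ _ (eq_trans Htop Ht1)); [exact Hr |].
  rewrite Hl, Hl1, Hl2; reflexivity.
Qed.

Lemma section_i_span_square : section_i span_square span_square_mor.
Proof.
  split; [exact istar_span_square | split; [| split]].
  - intros X Y t HX HY Ht; split; [exact (span_square_mor_sq_mor X Y t HX HY Ht) |].
    destruct t; reflexivity.
  - exact span_square_mor_id.
  - exact span_square_mor_comp.
Qed.

Lemma nat_w_id4 : nat_w span_square span_square_mor (id4 C).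
Proof.
  split; [| split].
  - intros s; rewrite span_square_istar; apply sq_mor_id4.
  - intros s; unfold id4; simpl; auto.
  - intros s s' t Ht.
    rewrite span_square_mor_istar, (comp4_id4l s s' t), (comp4_id4r s s' t) by exact Ht.
    reflexivity.
Qed.

Definition cospan_square (X : Cospan C) : Sq C := cofill (co_v X) (co_h X).

Definition cospan_upper (t : CMor3 C) (Y : Cospan C) : Sq C :=
  cofill (k_b t) (top (cospan_square Y)).

Definition cospan_square_mor (_ Y : Cospan C) (t : CMor3 C) : Mor4 C :=
  mkMor4 C (left (cospan_upper t Y)) (k_b t) (k_c t) (k_d t).

Lemma cospan_square_spec (X : Cospan C) : is_cospan X ->
  right (cospan_square X) = co_v X /\ bottom (cospan_square X) = co_h X.
Proof. apply cofill_spec. Qed.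

Lemma cospan_square_corners (X : Cospan C) : is_cospan X ->
  cb C (cospan_square X) = cob X /\ cc C (cospan_square X) = coc X /\
  cd C (cospan_square X) = cod X.
Proof.
  intros HX; destruct (cospan_square_spec X HX) as [Hr Hb].
  unfold cb, cc, cd, cob, coc, cod; rewrite bd_b, <- bd_c, Hr, Hb; auto.
Qed.

Lemma jstar_cospan_square (X : Cospan C) : is_cospan X -> jstar C (cospan_square X) = X.
Proof.
  intros HX; destruct (cospan_square_spec X HX) as [Hr Hb].
  unfold jstar; rewrite Hr, Hb; destruct X; reflexivity.
Qed.

Lemma cospan_square_jstar (s : Sq C) : cospan_square (jstar C s) = s.
Proof. apply cofill_eq; reflexivity. Qed.

Lemma cospan_upper_spec (X Y : Cospan C) (t : CMor3 C) :
  is_cospan X -> is_cospan Y -> cospan_mor X Y t ->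
  right (cospan_upper t Y) = k_b t /\ bottom (cospan_upper t Y) = top (cospan_square Y) /\
  top (cospan_upper t Y) = top (cospan_square X) /\
  vcomp (left (cospan_upper t Y)) (left (cospan_square Y))
    = vcomp (left (cospan_square X)) (k_c t).
Proof.
  intros HX HY ((_ & Hb & _) & _ & _ & (q & Hqt & Hql & Hqr & Hqb) & Hv).
  destruct (cospan_square_spec X HX) as [HXr HXb].
  destruct (cospan_square_spec Y HY) as [HYr HYb].
  assert (Htgt : vtgt (k_b t) = htgt (top (cospan_square Y)))
    by (rewrite bd_b, HYr, Hb; reflexivity).
  destruct (cofill_spec _ _ Htgt) as [Hr Hbot].
  fold (cospan_upper t Y) in Hr, Hbot.
  assert (Hright : vcomp (right (cospan_upper t Y)) (right (cospan_square Y))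
                   = vcomp (right (cospan_square X)) (right q))
    by (rewrite Hr, Hqr, HXr, HYr; symmetry; exact Hv).
  destruct (vpaste_cospan (cospan_upper t Y) (cospan_square Y) (cospan_square X) q)
    as [Htop Hl]; try congruence.
  split_conj; congruence.
Qed.

Lemma cospan_square_mor_sq_mor (X Y : Cospan C) (t : CMor3 C) :
  is_cospan X -> is_cospan Y -> cospan_mor X Y t ->
  sq_mor (cospan_square X) (cospan_square Y) (cospan_square_mor X Y t).
Proof.
  intros HX HY Ht.
  destruct (cospan_upper_spec X Y t HX HY Ht) as (Hur & Hub & Hut & Hul).
  destruct (cospan_square_corners X HX) as (Xb & Xc & Xd).
  destruct (cospan_square_corners Y HY) as (Yb & Yc & Yd).
  destruct (cospan_square_spec X HX) as [HXr HXb].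
  destruct (cospan_square_spec Y HY) as [HYr HYb].
  destruct Ht as (Hb & Hc & Hd & Hbot & Hv).
  unfold sq_mor, cospan_square_mor; simpl.
  rewrite Xb, Xc, Xd, Yb, Yc, Yd, HXr, HYr, HXb, HYb.
  split_conj; auto.
  - apply vnat_comp_ok_intro; unfold ca; rewrite <- ?bd_a, <- ?bd_c; congruence.
  - rewrite <- Hut, <- Hur, <- Hub; apply sq_is_square.
Qed.

Lemma cospan_square_mor_jstar (s s' : Sq C) (t : Mor4 C) : sq_mor s s' t ->
  cospan_square_mor (jstar C s) (jstar C s') (jstar_mor t) = t.
Proof.
  intros (_ & _ & _ & _ & (q & _ & Hql & Hqr & Hqb) & _).
  unfold cospan_square_mor, cospan_upper; rewrite cospan_square_jstar; simpl.
  rewrite (cofill_eq _ _ q Hqr Hqb), Hql; destruct t; reflexivity.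
Qed.

Lemma cospan_square_mor_id (X : Cospan C) :
  is_cospan X -> cospan_square_mor X X (cid3 X) = id4 C (cospan_square X).
Proof.
  intros HX.
  assert (Hid : jstar_mor (id4 C (cospan_square X)) = cid3 X).
  { destruct (cospan_square_corners X HX) as (Xb & Xc & Xd).
    unfold jstar_mor, id4, cid3; simpl; rewrite Xb, Xc, Xd; reflexivity. }
  transitivity (cospan_square_mor (jstar C (cospan_square X)) (jstar C (cospan_square X))
                  (jstar_mor (id4 C (cospan_square X)))).
  - rewrite jstar_cospan_square, Hid by exact HX; reflexivity.
  - apply cospan_square_mor_jstar, sq_mor_id4.
Qed.

Lemma cospan_square_mor_comp (X Y Z : Cospan C) (t u : CMor3 C) :
  is_cospan X -> is_cospan Y -> is_cospan Z -> cospan_mor X Y t -> cospan_mor Y Z u ->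
  cospan_square_mor X Z (ccomp3 t u)
    = comp4 (cospan_square_mor X Y t) (cospan_square_mor Y Z u).
Proof.
  intros HX HY HZ Ht Hu.
  destruct (cospan_upper_spec X Y t HX HY Ht) as (Hr1 & Hb1 & _ & _).
  destruct (cospan_upper_spec Y Z u HY HZ Hu) as (Hr2 & Hb2 & Ht2 & _).
  assert (Hglue : bottom (cospan_upper t Y) = top (cospan_upper u Z)) by congruence.
  destruct (sq_vcomp_bd C _ _ Hglue) as (Hl & Hr & _ & Hbot).
  unfold cospan_square_mor, ccomp3, comp4, cospan_upper at 1; simpl; f_equal.
  rewrite (cofill_eq _ _ _ (eq_trans Hr (f_equal2 _ Hr1 Hr2)) (eq_trans Hbot Hb2)).
  exact Hl.
Qed.

Lemma section_j_cospan_square : section_j cospan_square cospan_square_mor.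
Proof.
  split; [exact jstar_cospan_square | split; [| split]].
  - intros X Y t HX HY Ht; split; [exact (cospan_square_mor_sq_mor X Y t HX HY Ht) |].
    destruct t; reflexivity.
  - exact cospan_square_mor_id.
  - exact cospan_square_mor_comp.
Qed.

Lemma nat_u_id4 (O : Ob C) : h_initial C O ->
  nat_u O cospan_square cospan_square_mor (id4 C).
Proof.
  intros HO; split; [| split; [| split]].
  - intros s; rewrite cospan_square_jstar; apply sq_mor_id4.
  - intros s; unfold id4; simpl; auto.
  - intros s; apply vwe_vid, HO.
  - intros s s' t Ht.
    rewrite cospan_square_mor_jstar, (comp4_id4l s s' t), (comp4_id4r s s' t) by exact Ht.
    reflexivity.
Qed.

End Stable.
End DoubleCategory.

Theorem proposition3p11 (C : DoubleCat) (O : Ob C) :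
  pointed C O -> stable_dc C -> stable_squares_category C O.
Proof.
  intros [Hinit Hterm] HC.
  split; [| split].
  - exact (conj (flat_stable C HC) (conj Hinit Hterm)).
  - exists (span_square C), (span_square_mor C).
    split; [apply section_i_span_square, HC |].
    exists (id4 C); apply nat_w_id4, HC.
  - exists (cospan_square C), (cospan_square_mor C).
    split; [apply section_j_cospan_square, HC |].
    exists (id4 C); apply nat_u_id4; assumption.
Qed.
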